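(* Let $M$ be an $n\times n$ positive semidefinite matrix of rank $d$, and write $M=V^TV$ with $V\in\mathbb{R}^{d\times n}$ having columns $v_1,\dots,v_n$. Let $\alpha\ge 0$ and let $c=(c_1,\dots,c_n)$ be an $\alpha$-optimal solution of the program \[ \text{maximize } \ln\det\Big(\sum_{i=1}^n c_iv_iv_i^T\Big)\quad\text{s.t. } \sum_{i=1}^n c_i=d,\ c_i\ge 0\ \ \forall i. \] Let $S$ be a random multiset of $d$ elements of $[n]$, each sampled independently with replacement with $\Pr[\text{element}=\ell]=c_\ell/d$. Then \[ \mathbb{E}\,\det(M_{S,S})\ \ge\ \frac{d!}{d^d}\,e^{-\alpha}\,\mathrm{msd}_d(M), \] and $\frac{d!}{d^d}\sim\sqrt{2\pi d}\,e^{-d}$.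
   Context: For a multiset $S$ of indices, $M_{S,S}$ is the submatrix of $M$ with rows and columns indexed by $S$, repeated according to multiplicity. $\mathrm{msd}_j(M)\coloneqq\max\{\det(M_{T,T}): T\subseteq[n],\ |T|=j\}$. A feasible solution $c$ of a maximization problem with optimal value $v^*$ is $\alpha$-optimal if its objective value is at least $v^*-\alpha$ (with $\ln\det$ of a singular matrix taken to be $-\infty$). *)

From HB Require Import structures.
From Stdlib Require Import Reals Lra ClassicalEpsilon FunctionalExtensionality.
From mathcomp Require Import all_boot all_order all_algebra.
Set Implicit Arguments. Unset Strict Implicit. Unset Printing Implicit Defensive.
Import Order.TTheory GRing.Theory Num.Theory.

Definition eqr (x y : R) : bool := if Req_EM_T x y then true else false.
Lemma eqrP : Equality.axiom eqr.
Proof. move=> x y; rewrite /eqr; case: Req_EM_T => h; [left|right]; done. Qed.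
HB.instance Definition _ := hasDecEq.Build R eqrP.

Fact inhR : inhabited R. Proof. exact: (inhabits (IZR 0)). Qed.
Definition pickR (P : pred R) (n : nat) :=
  let x := epsilon inhR P in if P x then Some x else None.
Fact pickR_some P n x : pickR P n = Some x -> P x.
Proof. by rewrite /pickR; case: (boolP (P _)) => // Px [<-]. Qed.
Fact pickR_ex (P : pred R) : (exists x : R, P x) -> exists n, pickR P n.
Proof. by rewrite /pickR; move=> /(epsilon_spec inhR)->; exists 0%N. Qed.
Fact pickR_ext (P Q : pred R) : P =1 Q -> pickR P =1 pickR Q.
Proof.
move=> PEQ n; rewrite /pickR.
have -> : P = Q by apply: functional_extensionality.
by [].
Qed.
HB.instance Definition _ := hasChoice.Build R pickR_some pickR_ex pickR_ext.

Lemma R_addA : associative Rplus. Proof. move=> *; ring. Qed.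
Lemma R_addC : commutative Rplus. Proof. move=> *; ring. Qed.
Lemma R_add0 : left_id (IZR 0) Rplus. Proof. move=> *; ring. Qed.
Lemma R_addN : left_inverse (IZR 0) Ropp Rplus. Proof. move=> *; ring. Qed.
HB.instance Definition _ := GRing.isZmodule.Build R R_addA R_addC R_add0 R_addN.

Lemma R_mulA : associative Rmult. Proof. move=> *; ring. Qed.
Lemma R_mulC : commutative Rmult. Proof. move=> *; ring. Qed.
Lemma R_mul1 : left_id (IZR 1) Rmult. Proof. move=> *; ring. Qed.
Lemma R_mulDl : left_distributive Rmult Rplus. Proof. move=> *; ring. Qed.
Lemma R_one_neq0 : (IZR 1 != IZR 0). Proof. by apply/eqP; apply: R1_neq_R0. Qed.
HB.instance Definition _ :=
  GRing.Zmodule_isComNzRing.Build R R_mulA R_mulC R_mul1 R_mulDl R_one_neq0.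

Local Open Scope ring_scope.
Definition Rinvx (x : R) : R := if x == 0 then 0 else Rinv x.
Lemma R_mulVf (x : R) : x != 0 -> Rinvx x * x = 1.
Proof. move=> hx; move/eqP: (hx) => h; rewrite /Rinvx (negPf hx); exact: (Rinv_l x h). Qed.
Lemma R_inv0 : Rinvx 0 = 0. Proof. by rewrite /Rinvx eqxx. Qed.
HB.instance Definition _ := GRing.ComNzRing_isField.Build R R_mulVf R_inv0.

Definition Rleb (x y : R) : bool := if Rle_dec x y then true else false.
Definition Rltb (x y : R) : bool := if Rlt_dec x y then true else false.
Lemma RlebP x y : reflect (Rle x y) (Rleb x y).
Proof. rewrite /Rleb; case: Rle_dec=> h; [left|right]; done. Qed.
Lemma RltbP x y : reflect (Rlt x y) (Rltb x y).
Proof. rewrite /Rltb; case: Rlt_dec=> h; [left|right]; done. Qed.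
Lemma R0E : (0 : R) = IZR 0. Proof. by []. Qed.
Lemma RaddE (x y : R) : x + y = Rplus x y. Proof. by []. Qed.
Lemma RmulE (x y : R) : x * y = Rmult x y. Proof. by []. Qed.
Lemma RoppE (x : R) : - x = Ropp x. Proof. by []. Qed.

Lemma R_le0_add x y : Rleb 0 x -> Rleb 0 y -> Rleb 0 (x + y).
Proof. move=> /RlebP h1 /RlebP h2; apply/RlebP; lra. Qed.
Lemma R_le0_mul x y : Rleb 0 x -> Rleb 0 y -> Rleb 0 (x * y).
Proof. move=> /RlebP h1 /RlebP h2; apply/RlebP; exact: Rmult_le_pos. Qed.
Lemma R_le0_anti x : Rleb 0 x -> Rleb x 0 -> x = 0.
Proof. move=> /RlebP h1 /RlebP h2; apply: Rle_antisym. exact: h2. exact: h1. Qed.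
Lemma R_sub_ge0 x y : Rleb 0 (y - x) = Rleb x y.
Proof. by apply/RlebP/RlebP; rewrite /Rminus; lra. Qed.
Lemma R_le0_total x : Rleb 0 x || Rleb x 0.
Proof. case: (Rle_dec 0 x) => h; [by rewrite /Rleb; case: Rle_dec|].
by apply/orP; right; apply/RlebP; lra. Qed.
Lemma R_normN x : Rabs (- x) = Rabs x. Proof. exact: Rabs_Ropp. Qed.
Lemma R_ge0_norm x : Rleb 0 x -> Rabs x = x.
Proof. by move=> /RlebP h; apply: Rabs_right; lra. Qed.
Lemma R_lt_def x y : Rltb x y = (y != x) && Rleb x y.
Proof.
apply/RltbP/andP => [h|[/eqP h1 /RlebP h2]]; last by lra.
by split; [apply/eqP; lra| apply/RlebP; lra].
Qed.
HB.instance Definition _ := Num.IntegralDomain_isLeReal.Build R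
  R_le0_add R_le0_mul R_le0_anti R_sub_ge0 R_le0_total R_normN R_ge0_norm R_lt_def.


Definition psd (n : nat) (M : 'M[R]_n) : Prop :=
  M^T = M /\ forall x : 'cV[R]_n, 0 <= (x^T *m M *m x) 0 0.

Definition subm (n k : nat) (M : 'M[R]_n) (s : 'I_k -> 'I_n) : 'M[R]_k :=
  \matrix_(i < k, j < k) M (s i) (s j).

Definition pminor (n : nat) (M : 'M[R]_n) (T : {set 'I_n}) : R :=
  \det (subm M (fun i : 'I_#|T| => enum_val i)).

Definition msd (n : nat) (j : nat) (M : 'M[R]_n) : R :=
  \big[Num.max/0]_(T : {set 'I_n} | #|T| == j) pminor M T.

Definition feasible (n d : nat) (c : 'I_n -> R) : Prop :=
  (forall i, 0 <= c i) /\ \sum_i c i = d%:R.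

Definition wmx (n d : nat) (V : 'M[R]_(d, n)) (c : 'I_n -> R) : 'M[R]_d :=
  \sum_i c i *: (col i V *m (col i V)^T).

(* ln det A in the extended reals: None stands for -infinity
   (ln det of a singular matrix is -infinity; for the PSD matrices
   occurring here det is never negative). *)
Definition lndet (d : nat) (A : 'M[R]_d) : option R :=
  if 0 < \det A then Some (ln (\det A)) else None.

Definition ext_ge_sub (x y : option R) (a : R) : Prop :=
  match y with
  | None => True
  | Some yv => match x with None => False | Some xv => yv - a <= xv end
  end.

(* c is alpha-optimal for  max ln det (sum c_i v_i v_i^T)  s.t. feasible c:
   c is feasible and its objective value is at least v* - alpha, where v*
   is the optimal value (i.e. at least (value of c') - alpha for every
   feasible c'). *)
Definition alpha_optimal (n d : nat) (V : 'M[R]_(d, n)) (alpha : R)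
    (c : 'I_n -> R) : Prop :=
  feasible d c /\
  forall c' : 'I_n -> R, feasible d c' ->
    ext_ge_sub (lndet (wmx V c)) (lndet (wmx V c')) alpha.

(* E det(M_{S,S}) where S = (s_1,...,s_d) consists of d indices drawn
   independently with replacement, Pr[s_k = l] = c_l / d. *)
Definition expected_det (n d : nat) (M : 'M[R]_n) (c : 'I_n -> R) : R :=
  \sum_(s : {ffun 'I_d -> 'I_n})
     (\prod_(k < d) (c (s k) / d%:R)) * \det (subm M s).

Local Close Scope ring_scope.
Definition stirling_ratio (k : nat) : R :=
  (INR (k`!) / (INR k ^ k)) / (sqrt (2 * PI * INR k) * exp (- INR k)).

(* Expanding det (sum_i c_i v_i v_i^T) multilinearly and symmetrising over
   permutations of the columns gives
     d! det (sum_i c_i v_i v_i^T) = sum_f (prod_j c_(f j)) det (V_f)^2,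
   where V_f has columns v_(f 1), ..., v_(f d); since det (M_(S,S)) = det (V_S)^2,
   this says E det (M_(S,S)) = d!/d^d det (sum_i c_i v_i v_i^T).  For a d-set T
   the indicator of T is feasible with objective ln det (M_(T,T)), so
   alpha-optimality gives det (sum_i c_i v_i v_i^T) >= e^-alpha msd_d (M).
   For the asymptotics, a_n = ln n! - (n + 1/2) ln n + n is decreasing and
   bounded below, and Wallis' integrals W_n = int_0^(pi/2) sin^n, through
   (2n+1) W_(2n+1) W_(2n) = pi/2 and W_(2n+1) / W_(2n) -> 1, identify its limit
   as ln (2 pi) / 2. *)

From Stdlib Require Import Reals Lra.
From mathcomp Require Import all_boot all_order all_algebra all_fingroup.
From Coquelicot Require Coquelicot.
Set Implicit Arguments. Unset Strict Implicit. Unset Printing Implicit Defensive.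

Module Stirling.
Import Coquelicot.Coquelicot.
Local Open Scope R_scope.

Lemma le_is_derive_ge0 (F F' : R -> R) (a t : R) :
  (forall x, a <= x -> is_derive F x (F' x)) ->
  (forall x, a <= x -> 0 <= F' x) -> a <= t -> F a <= F t.
Proof.
move=> dF F'_ge0 /Rle_lt_or_eq_dec [lt_at|<-]; last exact: Rle_refl.
have [x [eq_dF [ax _]]] := MVT_cor2 F F' a t lt_at
  (fun x hx => proj1 (is_derive_Reals F x (F' x)) (dF x (proj1 hx))).
have := F'_ge0 x (Rlt_le _ _ ax); nra.
Qed.

Lemma ln_1p_ge (t : R) : 0 <= t -> 2 * t / (2 + t) <= ln (1 + t).
Proof.
move=> t_ge0.
pose F x := ln (1 + x) - 2 * x / (2 + x).
have : F 0 <= F t.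
  apply: (@le_is_derive_ge0 F (fun x => x ^ 2 / ((1 + x) * (2 + x) ^ 2)))
    => // x x_ge0; rewrite /F.
    by auto_derive; [lra | field; lra].
  apply: Rmult_le_pos; first nra.
  by apply/Rlt_le/Rinv_0_lt_compat; nra.
rewrite /F Rplus_0_r ln_1 /Rdiv Rmult_0_r Rmult_0_l; lra.
Qed.

Lemma ln_1p_le (t : R) : 0 <= t -> ln (1 + t) <= t - t ^ 2 / 2 + t ^ 3 / 3.
Proof.
move=> t_ge0.
pose F x := x - x ^ 2 / 2 + x ^ 3 / 3 - ln (1 + x).
have : F 0 <= F t.
  apply: (@le_is_derive_ge0 F (fun x => x ^ 3 / (1 + x))) => // x x_ge0;
    rewrite /F.
    by auto_derive; [lra | field; lra].
  apply: Rmult_le_pos; first nra.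
  by apply/Rlt_le/Rinv_0_lt_compat; lra.
rewrite /F Rplus_0_r ln_1; lra.
Qed.

Definition stirling_log (n : nat) : R :=
  ln (INR n`!) - (INR n + / 2) * ln (INR n) + INR n.

Lemma INR_factS (n : nat) : INR n.+1`! = INR n.+1 * INR n`!.
Proof. by rewrite factS mult_INR. Qed.

Lemma INR_fact_gt0 (n : nat) : 0 < INR n`!.
Proof. by apply: lt_0_INR; apply/ltP; rewrite fact_gt0. Qed.

Lemma INR_succ_ge1 (n : nat) : 1 <= INR n.+1.
Proof. by rewrite S_INR; have := pos_INR n; lra. Qed.

Lemma stirling_log_succ (n : nat) :
  stirling_log n.+1 - stirling_log n.+2 =
  (INR n.+1 + / 2) * ln (1 + / INR n.+1) - 1.
Proof.
have n1_ge1 := INR_succ_ge1 n.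
have n2_eq : INR n.+2 = INR n.+1 + 1 by rewrite S_INR.
have -> : 1 + / INR n.+1 = INR n.+2 / INR n.+1 by rewrite n2_eq; field; lra.
rewrite /stirling_log [INR n.+2`!]INR_factS ln_mult ?ln_div; try lra;
  last exact: INR_fact_gt0.
rewrite n2_eq; ring.
Qed.

Lemma stirling_step_bounds (y : R) : 1 <= y ->
  0 <= (y + / 2) * ln (1 + / y) - 1 <= / (2 * y) - / (2 * (y + 1)).
Proof.
move=> y_ge1.
have t_gt0 : 0 < / y by apply: Rinv_0_lt_compat; lra.
have t_le1 : / y <= 1 by rewrite -Rinv_1; apply: Rinv_le_contravar; lra.
have lo := Rmult_le_compat_l (y + / 2) _ _ ltac:(lra) (ln_1p_ge (Rlt_le _ _ t_gt0)).
have hi := Rmult_le_compat_l (y + / 2) _ _ ltac:(lra) (ln_1p_le (Rlt_le _ _ t_gt0)).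
have y_eq : y = / / y by rewrite Rinv_inv.
set t := / y in t_gt0 t_le1 y_eq lo hi *.
have lo_eq : (y + / 2) * (2 * t / (2 + t)) = 1 by rewrite y_eq; field; lra.
have hi_eq : (y + / 2) * (t - t ^ 2 / 2 + t ^ 3 / 3) - 1 = t ^ 2 / 12 + t ^ 3 / 6.
  by rewrite y_eq; field; lra.
have gap_eq : / (2 * y) - / (2 * (y + 1)) - (t ^ 2 / 12 + t ^ 3 / 6) =
              t ^ 2 * (1 - t) * (5 + 2 * t) / (12 * (1 + t)).
  by rewrite y_eq; field; lra.
have : 0 <= t ^ 2 * (1 - t) * (5 + 2 * t) / (12 * (1 + t)).
  apply: Rmult_le_pos; first by apply: Rmult_le_pos; [apply: Rmult_le_pos|]; nra.
  by apply/Rlt_le/Rinv_0_lt_compat; lra.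
lra.
Qed.

Lemma stirling_log_cvg : exists C : R, is_lim_seq stirling_log C.
Proof.
pose u n := stirling_log n.+1.
have step n := stirling_step_bounds (INR_succ_ge1 n).
have u_decr n : u n.+1 <= u n.
  by have := stirling_log_succ n; have := step n; rewrite /u; lra.
have u_ge n : u 0%nat - / 2 <= u n - / (2 * INR n.+1).
  elim: n => [|n IH]; first by rewrite /=; lra.
  have := stirling_log_succ n; have := step n.
  by rewrite /u [INR n.+2]S_INR in IH *; lra.
have u_lb n : u 0%nat - / 2 <= u n.
  have := u_ge n; have : 0 < / (2 * INR n.+1).
    by apply: Rinv_0_lt_compat; have := INR_succ_ge1 n; lra.
  lra.
have [C uC] := ex_finite_lim_seq_decr u _ u_decr u_lb.
by exists C; apply/is_lim_seq_incr_1.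
Qed.

Definition wallis (n : nat) : R := RInt (fun x => sin x ^ n) 0 (PI / 2).

Lemma ex_RInt_sin_pow (n : nat) : ex_RInt (fun x => sin x ^ n) 0 (PI / 2).
Proof. by apply: ex_RInt_continuous => x _; apply: ex_derive_continuous; auto_derive. Qed.

Lemma wallis0 : wallis 0 = PI / 2.
Proof. by rewrite /wallis /= RInt_const /scal /= /mult /=; ring. Qed.

Lemma wallis1 : wallis 1 = 1.
Proof.
rewrite /wallis (is_RInt_unique _ _ _ (minus (- cos (PI / 2)) (- cos 0))).
  by rewrite /minus /plus /opp /= cos_PI2 cos_0; ring.
apply: (is_RInt_derive (fun x => - cos x)) => x _.
  by auto_derive; [|ring].
by apply: ex_derive_continuous; auto_derive.
Qed.

Lemma wallis_rec (n : nat) : INR n.+2 * wallis n.+2 = INR n.+1 * wallis n.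
Proof.
pose F x := - cos x * sin x ^ n.+1.
pose f x := INR n.+2 * sin x ^ n.+2 - INR n.+1 * sin x ^ n.
have f_int : is_RInt f 0 (PI / 2) (minus (F (PI / 2)) (F 0)).
  apply: is_RInt_derive => x _; last first.
    by apply: ex_derive_continuous; rewrite /f; auto_derive.
  rewrite /F.
  auto_derive => //.
  (* auto_derive leaves INR n.+1 unfolded *)
  change (match n with 0%nat => 1 | S _ => INR n + 1 end) with (INR n.+1).
  have cos2 : cos x * cos x = 1 - sin x * sin x.
    by have := sin2_cos2 x; rewrite /Rsqr; lra.
  rewrite /f [INR n.+2]S_INR [sin x ^ n.+2]/=.
  transitivity (sin x * (sin x * sin x ^ n) - INR n.+1 * sin x ^ n * (cos x * cos x)).
    ring.
  by rewrite cos2; ring.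
have f_intW : is_RInt f 0 (PI / 2)
    (minus (scal (INR n.+2) (wallis n.+2)) (scal (INR n.+1) (wallis n))).
  apply: is_RInt_minus; apply: is_RInt_scal; exact: RInt_correct (ex_RInt_sin_pow _).
have := is_RInt_unique _ _ _ _ f_int; rewrite (is_RInt_unique _ _ _ _ f_intW).
rewrite /F cos_PI2 sin_0 /minus /plus /opp /scal /= /mult /=; lra.
Qed.

Lemma sin_pow_bounds (n : nat) (x : R) : 0 <= x <= PI / 2 ->
  0 <= sin x ^ n.+1 <= sin x ^ n.
Proof.
move=> x_range.
have sin_ge0 : 0 <= sin x by apply: sin_ge_0; have := PI_RGT_0; lra.
have sin_le1 : sin x <= 1 by have := SIN_bound x; lra.
have := pow_le _ n sin_ge0; rewrite /=; nra.
Qed.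

Lemma wallis_ge0 (n : nat) : 0 <= wallis n.
Proof.
apply: RInt_ge_0; [have := PI_RGT_0; lra | exact: ex_RInt_sin_pow |].
move=> x x_range; apply: pow_le; apply: sin_ge_0; have := PI_RGT_0; lra.
Qed.

Lemma wallis_decr (n : nat) : wallis n.+1 <= wallis n.
Proof.
apply: RInt_le; try exact: ex_RInt_sin_pow; first by have := PI_RGT_0; lra.
by move=> x x_range; have [] := @sin_pow_bounds n x ltac:(lra).
Qed.

Lemma wallis_prod (n : nat) : INR n.+1 * wallis n.+1 * wallis n = PI / 2.
Proof.
elim: n => [|n IH]; first by rewrite wallis0 wallis1 /=; ring.
by rewrite wallis_rec -IH; ring.
Qed.

Lemma wallis_gt0 (n : nat) : 0 < wallis n.
Proof.
have [] := Rle_lt_or_eq_dec _ _ (wallis_ge0 n) => // wallis_eq0.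
have := wallis_prod n; rewrite -wallis_eq0; have := PI_RGT_0; lra.
Qed.

Lemma INR_double (n : nat) : INR n.*2 = 2 * INR n.
Proof. by rewrite -addnn plus_INR; ring. Qed.

Lemma wallis_odd (n : nat) :
  wallis n.*2.+1 * INR n.*2.+1`! = 4 ^ n * INR n`! ^ 2.
Proof.
elim: n => [|n IH]; first by rewrite wallis1 /=; ring.
have rec := wallis_rec n.*2.+1.
rewrite INR_factS S_INR INR_double in IH.
rewrite doubleS !INR_factS !S_INR INR_double in rec *.
set x := INR n in IH rec *; set F := INR n.*2`! in IH *.
transitivity ((2 * x + 1 + 1 + 1) * wallis n.*2.+3 * ((2 * x + 1 + 1) * ((2 * x + 1) * F))).
  ring.
rewrite rec.
transitivity ((2 * x + 1 + 1) ^ 2 * (wallis n.*2.+1 * ((2 * x + 1) * F))); first ring.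
by rewrite IH [4 ^ n.+1]/=; ring.
Qed.

Lemma is_lim_seq_inv_INR_succ : is_lim_seq (fun n => / INR n.+1) 0.
Proof.
have := is_lim_seq_inv _ _ (proj1 (is_lim_seq_incr_1 _ _) is_lim_seq_INR).
by apply.
Qed.

Definition wallis_ratio (n : nat) : R := wallis n.*2.+1 / wallis n.*2.

Lemma wallis_ratio_bounds (n : nat) : 1 - / INR n.+1 <= wallis_ratio n <= 1.
Proof.
have W0_gt0 := wallis_gt0 n.*2.
have n1_ge1 := INR_succ_ge1 n.
have W2_eq : wallis n.*2.+2 = (1 - / (2 * INR n.+1)) * wallis n.*2.
  apply: (Rmult_eq_reg_l (INR n.*2.+2)); last by rewrite S_INR; have := pos_INR n.*2.+1; lra.
  rewrite wallis_rec -doubleS INR_double S_INR INR_double S_INR.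
  by field; have := pos_INR n; lra.
have inv_le : / INR n.+1 >= / (2 * INR n.+1).
  by apply/Rle_ge/Rinv_le_contravar; lra.
have := wallis_decr n.*2; have := wallis_decr n.*2.+1; rewrite W2_eq /wallis_ratio.
by split; apply: (Rmult_le_reg_r (wallis n.*2)) => //;
  rewrite /Rdiv Rmult_assoc Rinv_l; nra.
Qed.

Lemma wallis_ratio_cvg : is_lim_seq wallis_ratio 1.
Proof.
apply: (is_lim_seq_le_le _ _ _ _ wallis_ratio_bounds); last exact: is_lim_seq_const.
have := is_lim_seq_minus' _ _ _ _ (is_lim_seq_const 1) is_lim_seq_inv_INR_succ.
by rewrite Rminus_0_r.
Qed.

Lemma ln_wallis_ratio (n : nat) :
  ln (wallis_ratio n.+1) = 4 * stirling_log n.+1 - 2 * stirling_log n.+1.*2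
                           - ln (2 + / INR n.+1) - ln PI.
Proof.
have x_gt0 : 0 < INR n.+1 by have := INR_succ_ge1 n; lra.
set m := n.+1 in x_gt0 *; set x := INR m in x_gt0 *.
have PI_gt0 := PI_RGT_0.
have f_gt0 := INR_fact_gt0 m; have F_gt0 := INR_fact_gt0 m.*2.
set f := INR m`! in f_gt0 *; set F := INR m.*2`! in F_gt0 *.
have ratio_eq : wallis_ratio m = 2 * (2 * x + 1) * wallis m.*2.+1 ^ 2 / PI.
  have := wallis_prod m.*2; have := wallis_gt0 m.*2; have := wallis_gt0 m.*2.+1.
  rewrite /wallis_ratio S_INR INR_double -/x => W1_gt0 W0_gt0 prod.
  have -> : PI = 2 * ((2 * x + 1) * wallis m.*2.+1 * wallis m.*2) by lra.
  by field; lra.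
have W1_eq : wallis m.*2.+1 = 4 ^ m * f ^ 2 / ((2 * x + 1) * F).
  have := wallis_odd m; rewrite INR_factS S_INR INR_double -/x -/f -/F => <-.
  by field; lra.
have ln_sq y : 0 < y -> ln (y ^ 2) = 2 * ln y.
  by move=> y_gt0; rewrite ln_pow //=; ring.
have ln_W1 : ln (wallis m.*2.+1) = x * ln 4 + 2 * ln f - ln (2 * x + 1) - ln F.
  have pow4_gt0 : 0 < 4 ^ m by apply: pow_lt; lra.
  have num_gt0 : 0 < 4 ^ m * f ^ 2 by apply: Rmult_lt_0_compat => //; apply: pow_lt.
  rewrite W1_eq ln_div //; last by nra.
  rewrite (ln_mult (4 ^ m)) ?(ln_mult (2 * x + 1)) ?ln_sq ?ln_pow -/x; try nra; ring.
have ln4 : ln 4 = 2 * ln 2 by rewrite -ln_sq; [congr ln; ring | lra].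
have ln_inv : ln (2 + / x) = ln (2 * x + 1) - ln x.
  by rewrite -ln_div; [congr ln; field | |]; lra.
have stirling_double : stirling_log m.*2 = ln F - (2 * x + / 2) * (ln 2 + ln x) + 2 * x.
  by rewrite /stirling_log INR_double -/x -/F ln_mult //; lra.
have W1_gt0 := wallis_gt0 m.*2.+1.
have W1_sq_gt0 : 0 < wallis m.*2.+1 ^ 2 by apply: pow_lt.
have c_gt0 : 0 < 2 * (2 * x + 1) by lra.
rewrite ratio_eq ln_div; last exact: PI_gt0; last by nra.
rewrite (ln_mult (2 * (2 * x + 1))) // (ln_mult 2 (2 * x + 1)) ?ln_sq //; try lra.
rewrite ln_W1 ln4 ln_inv stirling_double /stirling_log -/x -/f; field.
Qed.

Lemma continuity_pt_ln (y : R) : 0 < y -> continuity_pt ln y.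
Proof.
by move=> y_gt0; apply: derivable_continuous_pt; exists (/ y); apply: derivable_pt_lim_ln.
Qed.

Lemma stirling_log_lim : is_lim_seq stirling_log (ln (2 * PI) / 2).
Proof.
have [C aC] := stirling_log_cvg.
pose w n := 4 * stirling_log n.+1 - 2 * stirling_log n.+1.*2.
have wC : is_lim_seq w (4 * C - 2 * C).
  apply: is_lim_seq_minus'; apply: is_lim_seq_mult' (is_lim_seq_const _) _.
    exact: (proj1 (is_lim_seq_incr_1 _ _) aC).
  apply: (is_lim_seq_subseq _ _ (fun n => n.+1.*2)) => //.
  by apply: eventually_subseq => n; apply/ltP; rewrite doubleS.
have w_eq n : w n = ln (wallis_ratio n.+1) + ln (2 + / INR n.+1) + ln PI.
  by rewrite ln_wallis_ratio /w; ring.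
have wL : is_lim_seq w (ln 1 + ln (2 + 0) + ln PI).
  apply: (is_lim_seq_ext _ _ _ (fun n => esym (w_eq n))).
  apply: is_lim_seq_plus'; last exact: is_lim_seq_const.
  apply: is_lim_seq_plus'.
    apply: (is_lim_seq_continuous ln (fun n => wallis_ratio n.+1)).
      by apply: continuity_pt_ln; lra.
    exact: (proj1 (is_lim_seq_incr_1 _ _) wallis_ratio_cvg).
  apply: is_lim_seq_continuous; first by apply: continuity_pt_ln; lra.
  exact: is_lim_seq_plus' (is_lim_seq_const 2) is_lim_seq_inv_INR_succ.
have := is_lim_seq_unique _ _ wL; rewrite (is_lim_seq_unique _ _ wC) => -[wCL].
have -> : ln (2 * PI) / 2 = C.
  by rewrite ln_mult; [move: wCL; rewrite ln_1 Rplus_0_r; lra | lra | exact: PI_RGT_0].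
exact: aC.
Qed.

Lemma ln_sqrt_half (y : R) : 0 < y -> ln (sqrt y) = ln y / 2.
Proof.
move=> y_gt0; have sqrt_gt0 := sqrt_lt_R0 _ y_gt0.
by rewrite -{2}(sqrt_sqrt y) ?ln_mult; lra.
Qed.

Lemma stirling_ratio_succ (n : nat) :
  stirling_ratio n.+1 = exp (stirling_log n.+1 - ln (2 * PI) / 2).
Proof.
have x_gt0 : 0 < INR n.+1 by have := INR_succ_ge1 n; lra.
have f_gt0 := INR_fact_gt0 n.+1; have PI_gt0 := PI_RGT_0.
rewrite /stirling_ratio /stirling_log.
set x := INR n.+1 in x_gt0 *; set f := INR n.+1`! in f_gt0 *.
have pow_gt0 : 0 < x ^ n.+1 by apply: pow_lt.
have sqrt_gt0 : 0 < sqrt (2 * PI * x) by apply: sqrt_lt_R0; nra.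
have exp_gt0 := exp_pos (- x).
have num_gt0 : 0 < f / x ^ n.+1 by apply: Rdiv_lt_0_compat.
have den_gt0 : 0 < sqrt (2 * PI * x) * exp (- x) by apply: Rmult_lt_0_compat.
rewrite -[LHS]exp_ln; last exact: Rdiv_lt_0_compat.
congr exp.
rewrite !ln_div // ln_mult // ln_exp ln_sqrt_half; last by nra.
by rewrite (ln_mult (2 * PI)) ?ln_pow -/x //; nra.
Qed.

Lemma stirling_ratio_cvg : Un_cv stirling_ratio 1.
Proof.
apply/is_lim_seq_Reals/is_lim_seq_incr_1.
have := is_lim_seq_minus' _ _ _ _
  (proj1 (is_lim_seq_incr_1 _ _) stirling_log_lim) (is_lim_seq_const (ln (2 * PI) / 2)).
move/(is_lim_seq_continuous exp _ _ (derivable_continuous_pt _ _ (derivable_pt_exp _))).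
rewrite Rminus_eq_0 exp_0; apply: is_lim_seq_ext => n.
by rewrite stirling_ratio_succ.
Qed.

End Stirling.

Import Order.TTheory GRing.Theory Num.Theory.
Local Open Scope ring_scope.

Section DetExpansion.
Variable K : comPzRingType.

Lemma det_mulmx_rowsub m n (A : 'M[K]_(m, n)) (B : 'M[K]_(n, m)) :
  \det (A *m B) =
  \sum_(f : {ffun 'I_m -> 'I_n}) (\prod_i A i (f i)) * \det (rowsub f B).
Proof.
rewrite /(determinant (A *m B)).
under eq_bigr => s _.
  under eq_bigr => i _ do rewrite mxE.
  rewrite bigA_distr_bigA big_distrr /=.
  over.
rewrite exchange_big /=; apply: eq_bigr => f _.
rewrite /(determinant (rowsub f B)) big_distrr /=; apply: eq_bigr => s _.
rewrite big_split /= mulrCA; congr (_ * (_ * _)).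
by apply: eq_bigr => i _; rewrite mxE.
Qed.

Lemma det_colsub_perm m n (A : 'M[K]_(m, n)) (f : 'I_m -> 'I_n) (s : 'S_m) :
  \det (colsub (f \o s) A) = (-1) ^+ s * \det (colsub f A).
Proof.
by rewrite colsub_comp -col_permEsub col_permE det_mulmx det_perm odd_permV mulrC.
Qed.

Lemma sum_det_colsub_sym m n (A : 'M[K]_(m, n)) (c : 'I_n -> K) :
  m`!%:R * \sum_(f : {ffun 'I_m -> 'I_n})
             (\prod_i (A i (f i) * c (f i))) * \det (colsub f A) =
  \sum_(f : {ffun 'I_m -> 'I_n}) (\prod_i c (f i)) * \det (colsub f A) ^+ 2.
Proof.
pose g (f : {ffun 'I_m -> 'I_n}) := (\prod_i (A i (f i) * c (f i))) * \det (colsub f A).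
have g_perm (s : 'S_m) : \sum_f g f = \sum_(f : {ffun 'I_m -> 'I_n})
    (\prod_i c (f i)) * \det (colsub f A) * ((-1) ^+ s * \prod_i A i (f (s i))).
  have comp_inj : injective (fun f : {ffun 'I_m -> 'I_n} => [ffun i => f (s i)]).
    move=> f1 f2 /ffunP eq_f; apply/ffunP => i.
    by have := eq_f (s^-1 i)%g; rewrite !ffunE permKV.
  rewrite (reindex_inj comp_inj); apply: eq_bigr => f _.
  rewrite /g (eq_colsub _ (ffunE _)) (det_colsub_perm A f s).
  under eq_bigr => i _ do rewrite ffunE.
  rewrite big_split /=.
  have -> : \prod_i c (f (s i)) = \prod_i c (f i).
    exact: esym (reindex_inj (F := fun i => c (f i)) (@perm_inj _ s)).
  move: (\prod_i A i _) (\prod_i c _) ((-1) ^+ s) (\det _) => a b e D.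
  rewrite [a * b]mulrC -!mulrA; congr (_ * _).
  by rewrite mulrCA [RHS]mulrCA [D * a]mulrC.
have -> : m`!%:R * \sum_f g f = \sum_(s : 'S_m) \sum_f g f.
  by rewrite sumr_const card_Sn mulr_natl.
under eq_bigr => s _ do rewrite (g_perm s).
rewrite exchange_big /=; apply: eq_bigr => f _.
rewrite -big_distrr /= expr2 mulrA; congr (_ * _).
rewrite /(determinant (colsub f A)); apply: eq_bigr => s _.
by congr (_ * _); apply: eq_bigr => i _; rewrite mxE.
Qed.

Lemma det_weighted_gram m n (A : 'M[K]_(m, n)) (c : 'I_n -> K) :
  m`!%:R * \det (A *m diag_mx (\row_k c k) *m A^T) =
  \sum_(f : {ffun 'I_m -> 'I_n}) (\prod_i c (f i)) * \det (colsub f A) ^+ 2.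
Proof.
rewrite -sum_det_colsub_sym det_mulmx_rowsub; congr (_ * _); apply: eq_bigr => f _.
congr (_ * _); first by apply: eq_bigr => i _; rewrite mul_mx_diag !mxE.
by rewrite -trmx_mxsub det_tr.
Qed.

Lemma det_mul_tr_swap m k (U : 'M[K]_(m, k)) :
  k = m -> \det (U *m U^T) = \det (U^T *m U).
Proof. by move=> eq_km; subst k; rewrite !det_mulmx det_tr mulrC. Qed.

End DetExpansion.

Section GramDeterminants.
Variables (n d : nat) (V : 'M[R]_(d, n)).

Lemma wmxE (c : 'I_n -> R) : wmx V c = V *m diag_mx (\row_k c k) *m V^T.
Proof.
apply/matrixP => a b; rewrite /wmx summxE !mxE; apply: eq_bigr => k _.
by rewrite mul_mx_diag !mxE big_ord1 !mxE mulrCA mulrA.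
Qed.

Lemma subm_gram k (g : 'I_k -> 'I_n) :
  subm (V^T *m V) g = (colsub g V)^T *m colsub g V.
Proof. by apply/matrixP => i j; rewrite !mxE; apply: eq_bigr => a _; rewrite !mxE. Qed.

Lemma det_wmx_ge0 (c : 'I_n -> R) : (forall i, 0 <= c i) -> 0 <= \det (wmx V c).
Proof.
move=> c_ge0; have fact_gt0 : (0 : R) < d`!%:R by rewrite ltr0n fact_gt0.
rewrite -(pmulr_rge0 _ fact_gt0) wmxE det_weighted_gram.
by apply: sumr_ge0 => f _; rewrite mulr_ge0 ?sqr_ge0 ?prodr_ge0.
Qed.

Lemma expected_det_gram (c : 'I_n -> R) :
  expected_det d (V^T *m V) c = d`!%:R / d%:R ^+ d * \det (wmx V c).
Proof.
rewrite mulrAC wmxE det_weighted_gram big_distrl /=.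
apply: eq_bigr => f _; rewrite subm_gram det_mulmx det_tr -expr2.
by rewrite big_split /= prodr_const card_ord exprVn mulrAC.
Qed.

Lemma det_wmx_indicator (T : {set 'I_n}) : #|T| = d ->
  \det (wmx V (fun i => (i \in T)%:R)) = pminor (V^T *m V) T.
Proof.
move=> card_T; pose U : 'M[R]_(d, #|T|) := colsub enum_val V.
have -> : wmx V (fun i => (i \in T)%:R) = U *m U^T.
  apply/matrixP => a b; rewrite wmxE !mxE.
  transitivity (\sum_(k in T) V a k * V b k).
    rewrite [RHS]big_mkcond /=; apply: eq_bigr => k _; rewrite mul_mx_diag !mxE.
    by case: (k \in T); rewrite ?mulr1 ?mulr0 ?mul0r.
  by rewrite big_enum_val; apply: eq_bigr => j _; rewrite !mxE.
by rewrite det_mul_tr_swap // /pminor subm_gram.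
Qed.

Lemma indicator_feasible (T : {set 'I_n}) : #|T| = d ->
  feasible d (fun i => (i \in T)%:R).
Proof.
move=> card_T; split=> [i|]; first by case: (i \in T).
rewrite -card_T -sumr_const [RHS]big_mkcond /=.
by apply: eq_bigr => i _; case: (i \in T).
Qed.

Lemma msd_le_det_wmx (alpha : R) (c : 'I_n -> R) : alpha_optimal V alpha c ->
  msd d (V^T *m V) <= exp alpha * \det (wmx V c).
Proof.
move=> [[c_ge0 _] c_opt].
have exp_gt0 : 0 < exp alpha by apply/RltbP/exp_pos.
have bound_ge0 : 0 <= exp alpha * \det (wmx V c).
  by apply: mulr_ge0; [exact: ltW | exact: det_wmx_ge0].
apply: bigmax_le => // T /eqP card_T.
have [minor_le0|minor_gt0] := lerP (pminor (V^T *m V) T) 0.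
  exact: le_trans minor_le0 bound_ge0.
have := c_opt _ (indicator_feasible card_T).
rewrite /lndet det_wmx_indicator // minor_gt0 /=.
case: ifP => // /RltbP W_gt0 /RlebP; rewrite RaddE RoppE => ln_le.
move/RltbP: minor_gt0 => minor_gt0; move/RltbP: exp_gt0 => exp_gt0.
apply/RlebP/Rnot_lt_le; rewrite RmulE => lt_bound.
have := ln_increasing _ _ (Rmult_lt_0_compat _ _ exp_gt0 W_gt0) lt_bound.
by rewrite ln_mult // ln_exp; lra.
Qed.

End GramDeterminants.

Lemma expN_mul_exp (a : R) : exp (- a) * exp a = 1.
Proof. by change (Rmult (exp (Ropp a)) (exp a) = 1); rewrite -exp_plus Rplus_opp_l exp_0. Qed.

Theorem theorem3p2 :
  (forall (n d : nat) (M : 'M[R]_n) (V : 'M[R]_(d, n)) (alpha : R)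
          (c : 'I_n -> R),
      psd M -> \rank M = d -> M = V^T *m V ->
      0 <= alpha -> alpha_optimal V alpha c ->
      (d`!)%:R / (d%:R ^+ d) * exp (- alpha) * msd d M <= expected_det d M c)
  /\ Un_cv stirling_ratio 1%R.
Proof.
split; last exact: Stirling.stirling_ratio_cvg.
move=> n d M V alpha c _ _ -> _ c_opt.
rewrite expected_det_gram -mulrA ler_wpM2l ?divr_ge0 ?exprn_ge0 ?ler0n //.
have expN_ge0 : 0 <= exp (- alpha) by apply/RlebP/Rlt_le/exp_pos.
rewrite -[X in _ <= X]mul1r -(expN_mul_exp alpha) -mulrA.
by rewrite ler_wpM2l // msd_le_det_wmx.
Qed.
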